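(* Let $\mathbf{C}$ be a small groupoid with set of objects $\mathbf{C_0}$, set of morphisms $\mathbf{C_1}$, and source and target maps $s,t \colon \mathbf{C_1} \to \mathbf{C_0}$. Let $u$ be an object of $\mathbf{C}$ and let $h \colon \mathbf{C_0} \to \mathbf{C_1}$ be a map assigning to each object $e$ a morphism $h(e) \colon e \to u$, with $h(u) = \mathrm{id}_u$. For objects $e,e'$ put $h_{e,e'} = h(e')^{-1}h(e) \colon e \to e'$, and for each bijection $\sigma$ of $\mathbf{C_0}$ let $h_\sigma$ be the bisection $e \mapsto h_{e,\sigma(e)}$. Let $N$ be the subgroup of $\mathrm{Bis}(\mathbf{C})$ consisting of the bisections $n$ with $t\circ n = \mathrm{id}_{\mathbf{C_0}}$ (so $N \cong \prod_{e} \mathrm{End}(e)$), and let $H = \{h_\sigma : \sigma \text{ a bijection of } \mathbf{C_0}\}$. Then $\mathrm{Bis}(\mathbf{C})$ is generated by its subgroups $N$ and $H$; moreover $H$ acts on $N$ (by group automorphisms), and $\mathrm{Bis}(\mathbf{C})$ is isomorphic to the corresponding semidirect product $N \rtimes H$.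
   Context: A groupoid is a category in which every morphism is invertible. A bisection of $\mathbf{C}$ is a map $b \colon \mathbf{C_0} \to \mathbf{C_1}$ such that $s \circ b$ is the identity of $\mathbf{C_0}$ and $t \circ b \colon \mathbf{C_0} \to \mathbf{C_0}$ is a bijection. Bisections form a group $\mathrm{Bis}(\mathbf{C})$ under the composition $(b' \star b)(e) = b'(t(b(e))) \circ b(e)$, with inverse $b^{-1}(e) = b((t\circ b)^{-1}(e))^{-1}$. The set $H$ of bisections $h_\sigma$ is a subgroup of $\mathrm{Bis}(\mathbf{C})$ isomorphic to the group of bijections of $\mathbf{C_0}$. *)

From Stdlib Require Import ClassicalEpsilon.
Set Implicit Arguments.

(* A small groupoid: objects, morphisms, source/target, composition
   [comp g f] = g o f (meaningful when tgt f = src g), identities, inverses. *)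
Record groupoid := Groupoid {
  Ob : Type;
  Mor : Type;
  src : Mor -> Ob;
  tgt : Mor -> Ob;
  comp : Mor -> Mor -> Mor;
  idm : Ob -> Mor;
  inv : Mor -> Mor;
  src_comp : forall g f, tgt f = src g -> src (comp g f) = src f;
  tgt_comp : forall g f, tgt f = src g -> tgt (comp g f) = tgt g;
  comp_assoc : forall h g f, tgt f = src g -> tgt g = src h ->
      comp h (comp g f) = comp (comp h g) f;
  src_idm : forall e, src (idm e) = e;
  tgt_idm : forall e, tgt (idm e) = e;
  comp_idl : forall f, comp (idm (tgt f)) f = f;
  comp_idr : forall f, comp f (idm (src f)) = f;
  src_inv : forall f, src (inv f) = tgt f;
  tgt_inv : forall f, tgt (inv f) = src f;
  comp_invl : forall f, comp (inv f) f = idm (src f);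
  comp_invr : forall f, comp f (inv f) = idm (tgt f)
}.
Arguments src {_}. Arguments tgt {_}. Arguments comp {_}. Arguments idm {_}. Arguments inv {_}.

Section Bisections.
Context {C : groupoid}.

Definition bijective_map (A : Type) (f : A -> A) :=
  exists g : A -> A, (forall x, g (f x) = x) /\ (forall y, f (g y) = y).

Definition is_bis (b : Ob C -> Mor C) : Prop :=
  (forall e, src (b e) = e) /\ bijective_map (fun e => tgt (b e)).

Definition bis_mul (b' b : Ob C -> Mor C) : Ob C -> Mor C :=
  fun e => comp (b' (tgt (b e))) (b e).

Definition bis_one : Ob C -> Mor C := fun e => idm e.

(* (t o b)^{-1}, chosen classically (fallback e when no preimage exists) *)
Definition tb_inv (b : Ob C -> Mor C) (e : Ob C) : Ob C :=
  match excluded_middle_informative (exists x, tgt (b x) = e) with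
  | left H => proj1_sig (constructive_indefinite_description _ H)
  | right _ => e
  end.

Definition bis_inv (b : Ob C -> Mor C) : Ob C -> Mor C :=
  fun e => inv (b (tb_inv b e)).

Inductive gen (S : (Ob C -> Mor C) -> Prop) : (Ob C -> Mor C) -> Prop :=
  | gen_in : forall x, S x -> gen S x
  | gen_one : gen S bis_one
  | gen_mul : forall x y, gen S x -> gen S y -> gen S (bis_mul x y)
  | gen_inv : forall x, gen S x -> gen S (bis_inv x).

Definition inN (n : Ob C -> Mor C) : Prop :=
  is_bis n /\ forall e, tgt (n e) = e.

Definition h_sigma (h : Ob C -> Mor C) (sigma : Ob C -> Ob C) : Ob C -> Mor C :=
  fun e => comp (inv (h (sigma e))) (h e).

Definition inH (h : Ob C -> Mor C) (k : Ob C -> Mor C) : Prop :=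
  exists sigma, bijective_map sigma /\ k = h_sigma h sigma.

Definition act (k n : Ob C -> Mor C) : Ob C -> Mor C :=
  bis_mul (bis_mul k n) (bis_inv k).

Definition sd_mul (p q : (Ob C -> Mor C) * (Ob C -> Mor C))
  : (Ob C -> Mor C) * (Ob C -> Mor C) :=
  (bis_mul (fst p) (act (snd p) (fst q)), bis_mul (snd p) (snd q)).

End Bisections.
Arguments bis_one C : clear implicits.

(* The bisections with identity target map form the normal subgroup N, and the
   target map b |-> t o b is a homomorphism from Bis(C) onto the bijections of
   C0 with kernel N.  The bisections h_sigma form a section of it: t o h_sigma =
   sigma.  Hence every bisection b factors uniquely as b = n * h_(t o b) with n
   in N, and conjugation by H acts on N, which is exactly the semidirect
   product decomposition. *)

From Stdlib Require Import ClassicalEpsilon FunctionalExtensionality.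
Set Implicit Arguments.
Unset Strict Implicit.

Section BisectionGroup.
Context {C : groupoid}.
Implicit Types a b c k m n : Ob C -> Mor C.

Lemma tgt_tb_inv b : bijective_map (fun e => tgt (b e)) ->
  forall e, tgt (b (tb_inv b e)) = e.
Proof.
  intros [g [_ Hg]] e. unfold tb_inv.
  destruct (excluded_middle_informative _) as [Hex | Hnex].
  - exact (proj2_sig (constructive_indefinite_description _ Hex)).
  - exfalso; apply Hnex; exists (g e); apply Hg.
Qed.

Lemma tb_inv_tgt b : bijective_map (fun e => tgt (b e)) ->
  forall e, tb_inv b (tgt (b e)) = e.
Proof.
  intros Hb e. pose proof (tgt_tb_inv Hb (tgt (b e))) as E.
  destruct Hb as [g [Hg _]]. apply (f_equal g) in E. rewrite !Hg in E. exact E.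
Qed.

Lemma src_bis_mul a b : (forall e, src (a e) = e) ->
  forall e, src (bis_mul a b e) = src (b e).
Proof. intros Ha e. unfold bis_mul. rewrite src_comp; auto. Qed.

Lemma tgt_bis_mul a b : (forall e, src (a e) = e) ->
  forall e, tgt (bis_mul a b e) = tgt (a (tgt (b e))).
Proof. intros Ha e. unfold bis_mul. rewrite tgt_comp; auto. Qed.

Lemma src_bis_inv b : is_bis b -> forall e, src (bis_inv b e) = e.
Proof. intros [_ Hb] e. unfold bis_inv. rewrite src_inv. apply tgt_tb_inv, Hb. Qed.

Lemma tgt_bis_inv b : is_bis b -> forall e, tgt (bis_inv b e) = tb_inv b e.
Proof. intros [Hs _] e. unfold bis_inv. rewrite tgt_inv. apply Hs. Qed.

Lemma src_bis b : is_bis b -> forall e, src (b e) = e.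
Proof. intros [Hs _]. exact Hs. Qed.

Lemma bis_one_is_bis : is_bis (bis_one C).
Proof.
  split; [intro; apply src_idm |].
  exists (fun e => e). unfold bis_one. split; intro; rewrite tgt_idm; reflexivity.
Qed.

Lemma bis_mul_is_bis a b : is_bis a -> is_bis b -> is_bis (bis_mul a b).
Proof.
  intros [Ha [ga [Ha1 Ha2]]] [Hb [gb [Hb1 Hb2]]]. split.
  - intro e. rewrite src_bis_mul; auto.
  - exists (fun e => gb (ga e)). split; intro x; rewrite ?tgt_bis_mul by auto.
    + rewrite Ha1, Hb1; reflexivity.
    + rewrite Hb2, Ha2; reflexivity.
Qed.

Lemma bis_inv_is_bis b : is_bis b -> is_bis (bis_inv b).
Proof.
  intros Hb. split; [apply src_bis_inv, Hb |].
  exists (fun e => tgt (b e)). split; intro x; simpl; rewrite tgt_bis_inv by exact Hb.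
  - apply tgt_tb_inv, Hb.
  - apply tb_inv_tgt, Hb.
Qed.

End BisectionGroup.

Global Hint Resolve src_bis bis_one_is_bis bis_mul_is_bis bis_inv_is_bis : bis.

Section BisectionGroupLaws.
Context {C : groupoid}.
Implicit Types a b c k m n : Ob C -> Mor C.

Lemma bis_mulA a b c : is_bis a -> is_bis b ->
  bis_mul a (bis_mul b c) = bis_mul (bis_mul a b) c.
Proof.
  intros [Ha _] [Hb _]. apply functional_extensionality; intro e. unfold bis_mul.
  rewrite tgt_comp by (rewrite Hb; reflexivity).
  rewrite comp_assoc; rewrite ?Hb, ?Ha; reflexivity.
Qed.

Lemma bis_mul1l b : bis_mul (bis_one C) b = b.
Proof.
  apply functional_extensionality; intro e. unfold bis_mul, bis_one. apply comp_idl.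
Qed.

Lemma bis_mul1r b : is_bis b -> bis_mul b (bis_one C) = b.
Proof.
  intros [Hs _]. apply functional_extensionality; intro e. unfold bis_mul, bis_one.
  rewrite tgt_idm. rewrite <- (Hs e) at 2. apply comp_idr.
Qed.

Lemma bis_mulVl b : is_bis b -> bis_mul (bis_inv b) b = bis_one C.
Proof.
  intros [Hs Hb]. apply functional_extensionality; intro e.
  unfold bis_mul, bis_one, bis_inv. rewrite tb_inv_tgt, comp_invl, Hs; auto.
Qed.

Lemma bis_mulVr b : is_bis b -> bis_mul b (bis_inv b) = bis_one C.
Proof.
  intros Hb. apply functional_extensionality; intro e. unfold bis_mul, bis_one.
  rewrite (tgt_bis_inv Hb). unfold bis_inv. rewrite comp_invr, tgt_tb_inv; [reflexivity |].
  apply Hb.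
Qed.

Lemma bis_inv_uniq a b : is_bis a -> is_bis b ->
  bis_mul a b = bis_one C -> b = bis_inv a.
Proof.
  intros Ha Hb E.
  rewrite <- (bis_mul1l b), <- (bis_mulVl Ha), <- bis_mulA, E, bis_mul1r;
    auto with bis.
Qed.

Lemma bis_inv1 : bis_inv (bis_one C) = bis_one C.
Proof. symmetry. apply bis_inv_uniq, bis_mul1l; auto with bis. Qed.

Lemma bis_invM a b : is_bis a -> is_bis b ->
  bis_inv (bis_mul a b) = bis_mul (bis_inv b) (bis_inv a).
Proof.
  intros Ha Hb. symmetry. apply bis_inv_uniq; auto with bis.
  rewrite <- !bis_mulA, (bis_mulA (a := b)), bis_mulVr, bis_mul1l, bis_mulVr; auto with bis.
Qed.

Lemma bis_mulIr a b k : is_bis a -> is_bis b -> is_bis k ->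
  bis_mul a k = bis_mul b k -> a = b.
Proof.
  intros Ha Hb Hk E.
  rewrite <- (bis_mul1r Ha), <- (bis_mul1r Hb), <- (bis_mulVr Hk), !bis_mulA, E;
    auto with bis.
Qed.

Lemma bis_mulIl a b k : is_bis a -> is_bis b -> is_bis k ->
  bis_mul k a = bis_mul k b -> a = b.
Proof.
  intros Ha Hb Hk E.
  rewrite <- (bis_mul1l a), <- (bis_mul1l b), <- (bis_mulVl Hk), <- !bis_mulA, E;
    auto with bis.
Qed.

End BisectionGroupLaws.

Section Conjugation.
Context {C : groupoid}.
Implicit Types k m n : Ob C -> Mor C.

Lemma inN_act k n : is_bis k -> inN n -> inN (act k n).
Proof.
  intros Hk [Hn Tn]. split; [unfold act; auto with bis |].
  intro e. unfold act.
  rewrite tgt_bis_mul, tgt_bis_mul, Tn, tgt_bis_inv by auto with bis.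
  apply tgt_tb_inv, Hk.
Qed.

Lemma act_mul k n1 n2 : is_bis k -> is_bis n1 -> is_bis n2 ->
  act k (bis_mul n1 n2) = bis_mul (act k n1) (act k n2).
Proof.
  intros Hk Hn1 Hn2. unfold act.
  rewrite <- !bis_mulA, (bis_mulA (a := bis_inv k) (b := k)), bis_mulVl, bis_mul1l;
    auto with bis.
Qed.

Lemma act1 n : is_bis n -> act (bis_one C) n = n.
Proof. intros Hn. unfold act. rewrite bis_inv1, bis_mul1l, bis_mul1r; auto. Qed.

Lemma act_mul_l k1 k2 n : is_bis k1 -> is_bis k2 -> is_bis n ->
  act (bis_mul k1 k2) n = act k1 (act k2 n).
Proof.
  intros Hk1 Hk2 Hn. unfold act. rewrite bis_invM, !bis_mulA; auto with bis.
Qed.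

Lemma act_conjK k n : is_bis k -> is_bis n ->
  act k (bis_mul (bis_mul (bis_inv k) n) k) = n.
Proof.
  intros Hk Hn. unfold act.
  rewrite <- !bis_mulA, bis_mulVr, bis_mul1r, !bis_mulA, bis_mulVr, bis_mul1l;
    auto with bis.
Qed.

Lemma inN_conjV k n : is_bis k -> inN n -> inN (bis_mul (bis_mul (bis_inv k) n) k).
Proof.
  intros Hk [Hn Tn]. split; [auto with bis |].
  intro e. pose proof Hk as [Hks _].
  rewrite tgt_bis_mul, tgt_bis_mul, Tn, tgt_bis_inv by auto with bis.
  apply tb_inv_tgt, Hk.
Qed.

Lemma act_inj k m n : is_bis k -> is_bis m -> is_bis n -> act k m = act k n -> m = n.
Proof.
  intros Hk Hm Hn E. unfold act in E.
  apply bis_mulIr in E; auto with bis.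
  apply bis_mulIl in E; auto.
Qed.

Lemma sd_mul_morph n1 k1 n2 k2 : is_bis n1 -> is_bis k1 -> is_bis n2 -> is_bis k2 ->
  bis_mul (bis_mul n1 (act k1 n2)) (bis_mul k1 k2)
  = bis_mul (bis_mul n1 k1) (bis_mul n2 k2).
Proof.
  intros Hn1 Hk1 Hn2 Hk2. unfold act.
  rewrite <- !bis_mulA, (bis_mulA (a := bis_inv k1) (b := k1)), bis_mulVl, bis_mul1l;
    auto with bis.
Qed.

End Conjugation.

Section Factorisation.
Context {C : groupoid} (u : Ob C) (h : Ob C -> Mor C).
Hypothesis h_src : forall e, src (h e) = e.
Hypothesis h_tgt : forall e, tgt (h e) = u.

Lemma src_h_sigma sigma e : src (h_sigma h sigma e) = e.
Proof.
  unfold h_sigma. rewrite src_comp; [apply h_src |].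
  rewrite src_inv, !h_tgt; reflexivity.
Qed.

Lemma tgt_h_sigma sigma e : tgt (h_sigma h sigma e) = sigma e.
Proof.
  unfold h_sigma. rewrite tgt_comp, tgt_inv; [apply h_src |].
  rewrite src_inv, !h_tgt; reflexivity.
Qed.

Lemma inH_is_bis k : inH h k -> is_bis k.
Proof.
  intros [sigma [[g [Hg1 Hg2]] ->]]. split; [exact (src_h_sigma sigma) |].
  exists g. split; intro; rewrite tgt_h_sigma; auto.
Qed.

Lemma inH_eq_tgt k1 k2 : inH h k1 -> inH h k2 ->
  (forall e, tgt (k1 e) = tgt (k2 e)) -> k1 = k2.
Proof.
  intros [s1 [_ ->]] [s2 [_ ->]] T.
  enough (s1 = s2) by (subst; reflexivity).
  apply functional_extensionality; intro e.
  rewrite <- (tgt_h_sigma s1), <- (tgt_h_sigma s2). apply T.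
Qed.

Definition H_part (b : Ob C -> Mor C) := h_sigma h (fun e => tgt (b e)).

Definition N_part (b : Ob C -> Mor C) := bis_mul b (bis_inv (H_part b)).

Lemma inH_H_part b : is_bis b -> inH h (H_part b).
Proof. intros [_ Hb]. exists (fun e => tgt (b e)). split; [exact Hb | reflexivity]. Qed.

Lemma inN_N_part b : is_bis b -> inN (N_part b).
Proof.
  intros Hb. pose proof (inH_is_bis (inH_H_part Hb)) as Hk.
  split; [unfold N_part; auto with bis |].
  intro e. unfold N_part.
  rewrite tgt_bis_mul, tgt_bis_inv by auto with bis.
  rewrite <- (tgt_h_sigma (fun e => tgt (b e))). apply tgt_tb_inv, Hk.
Qed.

Lemma N_part_mul_H_part b : is_bis b -> bis_mul (N_part b) (H_part b) = b.
Proof.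
  intros Hb. pose proof (inH_is_bis (inH_H_part Hb)) as Hk. unfold N_part.
  rewrite <- bis_mulA, bis_mulVl, bis_mul1r; auto with bis.
Qed.

Lemma NH_factor_uniq n1 k1 n2 k2 : inN n1 -> inH h k1 -> inN n2 -> inH h k2 ->
  bis_mul n1 k1 = bis_mul n2 k2 -> n1 = n2 /\ k1 = k2.
Proof.
  intros [Hn1 Tn1] Hk1 [Hn2 Tn2] Hk2 E.
  assert (Ek : k1 = k2).
  { apply inH_eq_tgt; auto. intro e.
    rewrite <- (Tn1 (tgt (k1 e))), <- (Tn2 (tgt (k2 e))), <- !tgt_bis_mul
      by auto with bis.
    rewrite E; reflexivity. }
  subst k2. split; [| reflexivity].
  apply bis_mulIr with k1; auto using inH_is_bis.
Qed.

End Factorisation.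

Theorem theorem2 (C : groupoid) (u : Ob C) (h : Ob C -> Mor C)
  (h_src : forall e, src (h e) = e) (h_tgt : forall e, tgt (h e) = u)
  (h_u : h u = idm u) :
  (* Bis(C) is generated by N and H *)
  (forall b, is_bis b -> gen (fun x => inN x \/ inH h x) b)
  (* H acts on N by group automorphisms (via conjugation) *)
  /\ (forall k n, inH h k -> inN n -> inN (act k n))
  /\ (forall k n1 n2, inH h k -> inN n1 -> inN n2 ->
        act k (bis_mul n1 n2) = bis_mul (act k n1) (act k n2))
  /\ (forall k n, inH h k -> inN n -> exists m, inN m /\ act k m = n)
  /\ (forall k m n, inH h k -> inN m -> inN n -> act k m = act k n -> m = n)
  /\ (forall n, inN n -> act (bis_one C) n = n)
  /\ (forall k1 k2 n, inH h k1 -> inH h k2 -> inN n ->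
        act (bis_mul k1 k2) n = act k1 (act k2 n))
  (* Bis(C) is isomorphic to the semidirect product N x| H *)
  /\ exists f : (Ob C -> Mor C) * (Ob C -> Mor C) -> (Ob C -> Mor C),
       (forall p, inN (fst p) -> inH h (snd p) -> is_bis (f p))
       /\ (forall p q, inN (fst p) -> inH h (snd p) -> inN (fst q) -> inH h (snd q) ->
             f p = f q -> p = q)
       /\ (forall b, is_bis b -> exists p, inN (fst p) /\ inH h (snd p) /\ f p = b)
       /\ (forall p q, inN (fst p) -> inH h (snd p) -> inN (fst q) -> inH h (snd q) ->
             f (sd_mul p q) = bis_mul (f p) (f q)).
Proof.
  pose proof (inH_is_bis h_src h_tgt) as Hbis.
  pose proof (inN_N_part h_src h_tgt) as HN.
  split; [| split; [| split; [| split; [| split; [| split; [| split]]]]]].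
  - intros b Hb. rewrite <- (N_part_mul_H_part h_src h_tgt Hb).
    apply gen_mul; apply gen_in; auto using inH_H_part.
  - intros k n Hk Hn. apply inN_act; auto.
  - intros k n1 n2 Hk [Hn1 _] [Hn2 _]. apply act_mul; auto.
  - intros k n Hk Hn. exists (bis_mul (bis_mul (bis_inv k) n) k).
    split; [apply inN_conjV | apply act_conjK]; auto. apply Hn.
  - intros k m n Hk [Hm _] [Hn _]. apply act_inj; auto.
  - intros n [Hn _]. apply act1, Hn.
  - intros k1 k2 n Hk1 Hk2 [Hn _]. apply act_mul_l; auto.
  - exists (fun p => bis_mul (fst p) (snd p)). split; [| split; [| split]].
    + intros [n k] [Hn _] Hk. simpl. auto with bis.
    + intros [n1 k1] [n2 k2] Hn1 Hk1 Hn2 Hk2 E. simpl in *.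
      destruct (NH_factor_uniq h_src h_tgt Hn1 Hk1 Hn2 Hk2 E) as [-> ->]. reflexivity.
    + intros b Hb. exists (N_part h b, H_part h b). simpl.
      auto using inH_H_part, (N_part_mul_H_part h_src h_tgt).
    + intros [n1 k1] [n2 k2] [Hn1 _] Hk1 [Hn2 _] Hk2. simpl.
      apply sd_mul_morph; auto.
Qed.
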